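(* Let $s,t$ be real numbers with $t\ge s>0$, and define $K_0=1$, $K_1=t$, $K_2=t^2$, and $K_n = tK_{n-1}+s^2K_{n-2}$ for $n\ge 3$. Then $K_n \ge M_n$ for every integer $n\ge 0$.
   Context: For a real number $s$, a positive integer $n$ and a set $P \subseteq \mathbb{R}$, $\mathcal{G}_s^{n\times n}(P)$ denotes the set of all $n\times n$ real upper Hessenberg matrices $A=(a_{ij})$ with $a_{i+1,i} = s$ for $1\le i\le n-1$, $a_{ij}=0$ for $i > j+1$, and $a_{ij}\in P$ for all $i \le j$. For $n\ge 1$, $M_n$ is the maximum of $|\det A|$ over $A\in\mathcal{G}_s^{n\times n}([0,t])$, and $M_0 := 1$. *)

From mathcomp Require Import all_boot all_order all_algebra.
Set Implicit Arguments. Unset Strict Implicit. Unset Printing Implicit Defensive.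
Import Order.TTheory GRing.Theory Num.Theory.
Local Open Scope ring_scope.

(* G_s^{n x n}(P): upper Hessenberg n x n matrices with subdiagonal entries
   equal to s, zeros below the subdiagonal, and entries in P on and above
   the diagonal. Indices are 0-based ('I_n). *)
Definition hessG (R : realFieldType) (s : R) (P : R -> Prop) (n : nat)
  (A : 'M[R]_n) : Prop :=
  forall i j : 'I_n,
    ((i : nat) = j.+1 -> A i j = s) /\
    ((j.+1 < i)%N -> A i j = 0) /\
    ((i <= j)%N -> P (A i j)).

Definition itv0t (R : realFieldType) (t : R) : R -> Prop :=
  fun x => 0 <= x <= t.

(* M is M_n: for n >= 1 the maximum of |det A| over G_s^{n x n}([0,t]);
   M_0 := 1. *)
Definition isMn (R : realFieldType) (s t : R) (n : nat) (M : R) : Prop :=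
  if n is 0 then M = 1 else
  (exists A : 'M[R]_n, hessG s (itv0t t) A /\ `|\det A| = M) /\
  (forall A : 'M[R]_n, hessG s (itv0t t) A -> `|\det A| <= M).

Fixpoint Kseq (R : realFieldType) (s t : R) (n : nat) {struct n} : R :=
  match n with
  | 0 => 1
  | S n1 =>
    match n1 with
    | 0 => t
    | S n2 =>
      match n2 with
      | 0 => t ^+ 2
      | S _ => t * Kseq s t n1 + s ^+ 2 * Kseq s t n2
      end
    end
  end.

From mathcomp Require Import all_boot all_order all_algebra.
From mathcomp Require Import ring lra.
Import Order.TTheory GRing.Theory Num.Theory.
Local Open Scope ring_scope.
Set Implicit Arguments. Unset Strict Implicit. Unset Printing Implicit Defensive.

(* Multiplying A on the left by the unitriangular matrix whose first row is a
   vector v with v_0 = 1 leaves det A unchanged.  Choosing v by the recurrence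
   s v_(c+1) = - sum_(r <= c) a_(r,c) v_r clears the first row of the product
   except for its last entry, so that det A = (-s)^n v_n.  Since the a_(r,c)
   lie in [0, t], v_(c+1) is at most tau = t/s times the total mass of the
   negative v_r with r <= c, and -v_(c+1) at most tau times their positive
   mass.  Both masses are bounded by the Fibonacci polynomials F_k(tau), the
   smaller one even by the previous one, whence |v_n| <= tau F_n(tau); and
   s^n tau F_n(tau) = K_n. *)

Section HessenbergDet.
Variable R : comNzRingType.

Definition multipliers (s : R) (a : nat -> nat -> R) n (v : nat -> R) : Prop :=
  v 0%N = 1 /\ forall c, (c < n)%N -> s * v c.+1 = - \sum_(r < c.+1) a r c * v r.

Definition first_row_mx n (v : nat -> R) : 'M[R]_n.+1 :=
  \matrix_(i, j) if i == ord0 then v j else (i == j)%:R.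

Lemma det_first_row_mx n (v : nat -> R) : v 0%N = 1 -> \det (first_row_mx n v) = 1.
Proof.
move=> v0; rewrite -det_tr det_trig.
  by rewrite big1 // => i _; rewrite !mxE; case: eqP => [->|_]; rewrite ?v0 ?eqxx.
apply/forallP => i; apply/forallP => j; apply/implyP => i_lt_j.
have j_gt0 : (0 < j)%N := leq_ltn_trans (leq0n i) i_lt_j.
by rewrite !mxE -!val_eqE /= gtn_eqF // gtn_eqF.
Qed.

Lemma first_row_mxM n (v : nat -> R) (A : 'M_n.+1) i j :
  (first_row_mx n v *m A) i j =
  if i == ord0 then \sum_(k < n.+1) v k * A k j else A i j.
Proof.
rewrite mxE; case: ifP => [/eqP-> | i_neq0].
  by apply: eq_bigr => k _; rewrite mxE eqxx.
rewrite (bigD1 i) //= big1 ?addr0 => [|k k_neq_i]; rewrite mxE i_neq0.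
  by rewrite eqxx mul1r.
by rewrite eq_sym (negbTE k_neq_i) mul0r.
Qed.

Lemma det_cleared_hessenberg (s : R) m (B : 'M_m.+1) :
  (forall j : 'I_m.+1, (j < m)%N -> B ord0 j = 0) ->
  (forall i j : 'I_m.+1, i = j.+1 :> nat -> B i j = s) ->
  (forall i j : 'I_m.+1, (j.+1 < i)%N -> B i j = 0) ->
  \det B = (-1) ^+ m * B ord0 ord_max * s ^+ m.
Proof.
move=> B_row0 B_sub B_low.
rewrite (expand_det_row _ ord0) big_ord_recr /= big1 ?add0r => [|j _]; last first.
  by rewrite B_row0 ?mul0r //; exact: ltn_ord j.
rewrite /cofactor -det_tr det_trig.
  rewrite (eq_bigr (fun=> s)) => [|i _]; last by rewrite !mxE B_sub // lift0 lift_max.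
  by rewrite prodr_const card_ord add0n mulrCA mulrA.
apply/forallP => i; apply/forallP => j; apply/implyP => i_lt_j.
by rewrite !mxE B_low // lift0 lift_max ltnS.
Qed.

Lemma det_hessenberg (s : R) m (A : 'M_m.+1) v :
  (forall i j : 'I_m.+1, i = j.+1 :> nat -> A i j = s) ->
  (forall i j : 'I_m.+1, (j.+1 < i)%N -> A i j = 0) ->
  multipliers s (fun r c => A (inord r) (inord c)) m.+1 v ->
  \det A = (-s) ^+ m.+1 * v m.+1.
Proof.
move=> A_sub A_low [v0 v_rec].
rewrite -[\det A]mul1r -(det_first_row_mx m v0) -det_mulmx.
rewrite (det_cleared_hessenberg (s := s)) => [| j j_lt_m | i j | i j].
- rewrite first_row_mxM eqxx.
  have -> : \sum_(k < m.+1) v k * A k ord_max = - (s * v m.+1).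
    rewrite v_rec // opprK; apply: eq_bigr => k _; rewrite mulrC inord_val.
    by congr (A _ _ * _); apply: val_inj; rewrite /= inordK.
  rewrite exprS [(- s) ^+ m]exprNn.
  by move: ((-1) ^+ m) (s ^+ m) => sign sm; ring.
- rewrite first_row_mxM eqxx.
  pose col k : R := v k * A (inord k) j.
  rewrite (eq_bigr (fun k : 'I_m.+1 => col k)) => [|k _]; last by rewrite /col inord_val.
  rewrite -(big_mkord xpredT col) (big_cat_nat _ (n := j.+2)) //= /col.
  rewrite [X in _ + X]big_nat_cond [X in _ + X]big1 ?addr0 => [|k].
    rewrite big_nat_recr //= A_sub ?inordK // big_mkord.
    have := v_rec j (ltn_ord j); rewrite inord_val => v_rec_j.
    rewrite (mulrC (v j.+1)) v_rec_j; apply/eqP; rewrite subr_eq0; apply/eqP.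
    by apply: eq_bigr => k _; rewrite mulrC.
  by case/andP=> /andP[k_gt k_le] _; rewrite A_low ?mulr0 // inordK.
- by move=> ij; rewrite first_row_mxM -val_eqE /= ij /= A_sub.
- move=> ji; rewrite first_row_mxM -val_eqE /= gtn_eqF ?A_low //.
  exact: ltn_trans (ltn0Sn j) ji.
Qed.

End HessenbergDet.

Lemma multipliers_exist (R : fieldType) (s : R) (a : nat -> nat -> R) n :
  s != 0 -> exists v, multipliers s a n v.
Proof.
move=> s_neq0; elim: n => [|n [v [v0 v_rec]]]; first by exists (fun=> 1).
pose w j := if j == n.+1 then - (\sum_(r < n.+1) a r n * v r) / s else v j.
exists w; split=> // c c_le_n.
have -> : \sum_(r < c.+1) a r c * w r = \sum_(r < c.+1) a r c * v r.
  apply: eq_bigr => r _; rewrite /w ifF //.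
  exact: ltn_eqF (leq_trans (ltn_ord r) c_le_n).
rewrite /w eqSS; move: c_le_n; rewrite ltnS leq_eqVlt => /orP[/eqP->|c_lt_n].
  by rewrite eqxx mulrC divfK.
by rewrite ltn_eqF //; exact: v_rec.
Qed.

Section Fibonacci.
Variable R : realDomainType.

Fixpoint fibx (tau : R) (k : nat) : R :=
  match k with
  | 0 => 0
  | k1.+1 => if k1 is k2.+1 then tau * fibx tau k1 + fibx tau k2 else 1
  end.

Lemma fibxSS tau k : fibx tau k.+2 = tau * fibx tau k.+1 + fibx tau k.
Proof. by []. Qed.

Lemma fibx_ge0_leS tau k : 1 <= tau -> 0 <= fibx tau k <= fibx tau k.+1.
Proof.
move=> tau_ge1; elim: k => [|k /andP[F_ge0 F_leS]]; first by rewrite /= lexx ler01.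
rewrite fibxSS; apply/andP; split; first exact: le_trans F_leS.
nra.
Qed.

End Fibonacci.

Lemma KseqSSS (R : realFieldType) (s t : R) k :
  Kseq s t k.+3 = t * Kseq s t k.+2 + s ^+ 2 * Kseq s t k.+1.
Proof. by []. Qed.

Lemma Kseq_fibx (R : realFieldType) (s t : R) k : s != 0 ->
  Kseq s t k.+1 = s ^+ k.+1 * (t / s) * fibx (t / s) k.+1.
Proof.
move=> s_neq0; have t_def : t = (t / s) * s by rewrite divfK.
move: (t / s) t_def => tau t_def.
suff Kseq_pair j : Kseq s t j.+1 = s ^+ j.+1 * tau * fibx tau j.+1 /\
                   Kseq s t j.+2 = s ^+ j.+2 * tau * fibx tau j.+2.
  by case: (Kseq_pair k).
elim: j => [|j [IH1 IH2]]; first by rewrite /= t_def; split; ring.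
by split=> //; rewrite KseqSSS fibxSS IH1 IH2 t_def !exprS; ring.
Qed.

Section Masses.
Variable R : realDomainType.
Implicit Types (v : nat -> R) (t : R).

Definition pos_mass v k : R := \sum_(r < k) (if 0 <= v r then v r else 0).

Definition neg_mass v k : R := pos_mass (fun r => - v r) k.

Lemma pos_massS v k :
  pos_mass v k.+1 = pos_mass v k + (if 0 <= v k then v k else 0).
Proof. by rewrite /pos_mass big_ord_recr. Qed.

Lemma neg_massS v k :
  neg_mass v k.+1 = neg_mass v k + (if 0 <= v k then 0 else - v k).
Proof.
rewrite /neg_mass pos_massS oppr_ge0; congr (_ + _).
by case: ltgtP => // ->; rewrite oppr0.
Qed.

Lemma weighted_sum_le_pos_mass t (a : nat -> R) v k :
  (forall r, (r < k)%N -> 0 <= a r <= t) ->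
  \sum_(r < k) a r * v r <= t * pos_mass v k.
Proof.
move=> a_bnd; rewrite /pos_mass mulr_sumr; apply: ler_sum => r _.
have /andP[a_ge0 a_le] := a_bnd r (ltn_ord r).
case: ifP => [|/negbT]; rewrite -?ltNge => v_sgn; nra.
Qed.

Lemma weighted_sum_ge_neg_mass t (a : nat -> R) v k :
  (forall r, (r < k)%N -> 0 <= a r <= t) ->
  - (t * neg_mass v k) <= \sum_(r < k) a r * v r.
Proof.
move=> /(weighted_sum_le_pos_mass (fun r => - v r)).
by rewrite lerNl -sumrN; under eq_bigr do rewrite mulrN.
Qed.

End Masses.

Section MassBound.
Variables (R : realDomainType) (tau : R) (v : nat -> R) (n : nat).
Hypotheses (tau_ge1 : 1 <= tau) (v0 : v 0%N = 1).
Hypothesis v_le_mass : forall c, (c <= n)%N ->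
  v c.+1 <= tau * neg_mass v c.+1 /\ - v c.+1 <= tau * pos_mass v c.+1.

Lemma masses_le_fibx k : (k <= n)%N ->
  [/\ pos_mass v k.+1 <= fibx tau k.+1, neg_mass v k.+1 <= fibx tau k.+1
    & pos_mass v k.+1 <= fibx tau k \/ neg_mass v k.+1 <= fibx tau k].
Proof.
elim: k => [_|k IH k_lt_n].
  rewrite /neg_mass /pos_mass !big_ord1 v0 ler01 /= oppr_ge0 ler10.
  by split; rewrite ?lexx ?ler01 //; right.
have [P_le N_le PN_le] := IH (ltnW k_lt_n).
have [v_le mv_le] := v_le_mass (ltnW k_lt_n).
have tau_ge0 : 0 <= tau := le_trans ler01 tau_ge1.
have tauP_le := ler_wpM2l tau_ge0 P_le.
have tauN_le := ler_wpM2l tau_ge0 N_le.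
have /andP[_ F_leS] := fibx_ge0_leS k tau_ge1.
have /andP[_ F_leSS] := fibx_ge0_leS k.+1 tau_ge1.
have F_swap : fibx tau k.+1 + tau * fibx tau k <= fibx tau k.+2.
  have : 0 <= (tau - 1) * (fibx tau k.+1 - fibx tau k) by rewrite mulr_ge0 // subr_ge0.
  by rewrite fibxSS; lra.
move: F_leSS F_swap; rewrite pos_massS neg_massS fibxSS => F_leSS F_swap.
have [v_ge0|v_lt0] := lerP 0 (v k.+1); rewrite addr0.
- split; [case: PN_le => PN; have := ler_wpM2l tau_ge0 PN; lra | lra | by right].
- split; [lra | case: PN_le => PN; have := ler_wpM2l tau_ge0 PN; lra | by left].
Qed.

Lemma abs_le_fibx : `|v n.+1| <= tau * fibx tau n.+1.
Proof.
have [P_le N_le _] := masses_le_fibx (leqnn n).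
have [v_le mv_le] := v_le_mass (leqnn n).
have tau_ge0 : 0 <= tau := le_trans ler01 tau_ge1.
have tauP_le := ler_wpM2l tau_ge0 P_le.
have tauN_le := ler_wpM2l tau_ge0 N_le.
rewrite ler_norml; apply/andP; split; lra.
Qed.

End MassBound.

Lemma multipliers_bound (R : realFieldType) (s t : R) (a : nat -> nat -> R) n v :
  0 < s -> s <= t -> multipliers s a n.+1 v ->
  (forall r c, (r <= c <= n)%N -> 0 <= a r c <= t) ->
  `|v n.+1| <= t / s * fibx (t / s) n.+1.
Proof.
move=> s_gt0 s_le_t [v0 v_rec] a_bnd.
apply: abs_le_fibx => // [|c c_le_n]; first by rewrite ler_pdivlMr // mul1r.
have a_bnd_c r : (r < c.+1)%N -> 0 <= a r c <= t.
  by move=> r_le_c; apply: a_bnd; rewrite -ltnS r_le_c.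
have le_div x y : (x <= t / s * y) = (s * x <= t * y).
  by rewrite mulrAC ler_pdivlMr // (mulrC x).
rewrite !le_div mulrN v_rec // opprK lerNl.
by split; [apply: (weighted_sum_ge_neg_mass (a := a^~ c))
          | apply: (weighted_sum_le_pos_mass (a := a^~ c))].
Qed.

Theorem lemma3p5 (R : realFieldType) (s t : R) (hs : 0 < s) (hst : s <= t)
  (n : nat) (M : R) :
  isMn s t n M -> M <= Kseq s t n.
Proof.
case: n => [/= -> //|m [[A [hA <-]] _]].
pose a r c : R := A (inord r) (inord c).
have [v v_mult] := multipliers_exist a m.+1 (lt0r_neq0 hs).
have A_sub (i j : 'I_m.+1) : i = j.+1 :> nat -> A i j = s := proj1 (hA i j).
have A_low (i j : 'I_m.+1) : (j.+1 < i)%N -> A i j = 0 := proj1 (proj2 (hA i j)).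
have a_bnd r c : (r <= c <= m)%N -> 0 <= a r c <= t.
  case/andP=> r_le_c c_le_m; have c_lt := c_le_m : (c < m.+1)%N.
  have := proj2 (proj2 (hA (inord r) (inord c))).
  by rewrite !inordK //; [apply | exact: leq_ltn_trans r_le_c c_lt].
rewrite (det_hessenberg A_sub A_low v_mult) Kseq_fibx ?lt0r_neq0 //.
rewrite normrM normrX normrN (gtr0_norm hs) -mulrA ler_pM2l ?exprn_gt0 //.
exact: multipliers_bound hs hst v_mult a_bnd.
Qed.
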